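(* Let $\mathfrak g$ be a Lie algebra over a field $\mathbb k$ and $(X,\Delta,T)$ the associated TSD object obtained by composing the binary SD operation. For a Lie $2$-cochain $\phi$ define $\Theta^2(\phi)\colon X^{\otimes 3}\to X$ by $\Theta^2(\phi)((a,x)\otimes(b,y)\otimes(c,z))=\big(0,\ b\phi(x,z)+c\phi(x,y)+[\phi(x,y),z]+\phi([x,y],z)\big).$ Then $\Theta^2$ maps $Z^2_{\rm Lie}(\mathfrak g;\mathfrak g)$ into $Z^2_{\rm TSD}(X;X)$ and $B^2_{\rm Lie}(\mathfrak g;\mathfrak g)$ into $B^2_{\rm TSD}(X;X)$, and thus induces a homomorphism $H^2_{\rm Lie}(\mathfrak g;\mathfrak g)\to H^2_{\rm TSD}(X;X)$.
   Context: $X=\mathbb k\oplus\mathfrak g$, $\Delta(a,x)=(a,x)\otimes(1,0)+(1,0)\otimes(0,x)$, $\Delta_3=(\Delta\otimes\mathbb 1)\Delta$ (Sweedler $\Delta_3(w)=w^{(1)}\otimes w^{(2)}\otimes w^{(3)}$), $q((a,x)\otimes(b,y))=(ab,bx+[x,y])$, and $T=q\circ(q\otimes\mathbb 1)$, i.e. $T((a,x)\otimes(b,y)\otimes(c,z))=(abc,\ bcx+c[x,y]+b[x,z]+[[x,y],z])$. TSD cohomology: $\sigma\colon X^{\otimes 9}\to X^{\otimes 9}$ sends $u_1\otimes\cdots\otimes u_9$ to $u_1\otimes u_4\otimes u_7\otimes u_2\otimes u_5\otimes u_8\otimes u_3\otimes u_6\otimes u_9$. $C^1_{\rm TSD}$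 = linear $f$ with $\Delta_3 f=(f\otimes\mathbb 1\otimes\mathbb 1+\mathbb 1\otimes f\otimes\mathbb 1+\mathbb 1\otimes\mathbb 1\otimes f)\Delta_3$; $C^2_{\rm TSD}$ = linear $\psi\colon X^{\otimes 3}\to X$ with $\Delta_3\psi=(\psi\otimes T\otimes T+T\otimes\psi\otimes T+T\otimes T\otimes\psi)\sigma\Delta_3^{\otimes3}$; $\delta^1 f(x\otimes y\otimes z)=f(T(x\otimes y\otimes z))-T(f(x)\otimes y\otimes z)-T(x\otimes f(y)\otimes z)-T(x\otimes y\otimes f(z))$; $\delta^2\psi(x\otimes y\otimes z\otimes w\otimes u)=T(\psi(x\otimes y\otimes z)\otimes w\otimes u)+\psi(T(x\otimes y\otimes z)\otimes w\otimes u)-\psi(A_1\otimes A_2\otimes A_3)-T(\Psi_1\otimes A_2\otimes A_3)-T(A_1\otimes\Psi_2\otimes A_3)-T(A_1\otimes A_2\otimes\Psi_3)$, where $A_i=T(x_i\otimes w^{(i)}\otimes u^{(i)})$, $(x_1,x_2,x_3)=(x,y,z)$, $\Psi_i$ likewise with $\psi$; $Z^2_{\rm TSD}=C^2_{\rm TSD}\cap\ker\delta^2$, $B^2_{\rm TSD}=\delta^1(C^1_{\rm TSD})$, $H^2_{\rm TSD}=Z^2/B^2$. Lie cohomology: $2$-cochains are alternating bilinear $\phi\colon\mathfrak g\times\mathfrak g\to\mathfrak g$; $\delta^2\phi(x,y,z)=[\phi(x,y),z]+[\phi(y,z),x]+[\phi(z,x),y]+\phi([x,y],z)+\phi([y,z],x)+\phi([z,x],y)$;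 $\delta^1f(x,y)=f([x,y])-[f(x),y]-[x,f(y)]$; $H^2_{\rm Lie}=\ker\delta^2/\operatorname{im}\delta^1$. *)

From mathcomp Require Import all_boot all_order all_algebra.
Set Implicit Arguments. Unset Strict Implicit. Unset Printing Implicit Defensive.
Import GRing.Theory.
Local Open Scope ring_scope.

Section LieTSD.
Variable K : fieldType.
Variable g : lmodType K.
Variable br : g -> g -> g.

Definition linear_map (f : g -> g) : Prop :=
  forall (c : K) (x y : g), f (c *: x + y) = c *: f x + f y.

Definition bilinear_map (phi : g -> g -> g) : Prop :=
  (forall z, linear_map (fun x => phi x z)) /\ (forall x, linear_map (phi x)).

Definition is_lie_bracket : Prop :=
  [/\ bilinear_map br, (forall x, br x x = 0) &
      (forall x y z, br x (br y z) + br y (br z x) + br z (br x y) = 0)].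

Definition lie_cochain2 (phi : g -> g -> g) : Prop :=
  bilinear_map phi /\ (forall x, phi x x = 0).

Definition lie_d2 (phi : g -> g -> g) (x y z : g) : g :=
  br (phi x y) z + br (phi y z) x + br (phi z x) y
  + phi (br x y) z + phi (br y z) x + phi (br z x) y.

Definition lie_d1 (f : g -> g) (x y : g) : g :=
  f (br x y) - br (f x) y - br x (f y).

Definition lie_Z2 (phi : g -> g -> g) : Prop :=
  lie_cochain2 phi /\ (forall x y z, lie_d2 phi x y z = 0).

Definition lie_B2 (phi : g -> g -> g) : Prop :=
  exists f : g -> g, linear_map f /\ (forall x y, phi x y = lie_d1 f x y).

Definition X := (K * g)%type.
Definition Xadd (p q : X) : X := (p.1 + q.1, p.2 + q.2).
Definition Xsub (p q : X) : X := (p.1 - q.1, p.2 - q.2).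
Definition Xscale (c : K) (p : X) : X := (c * p.1, c *: p.2).
Definition X0 : X := (0, 0).
Definition Xe : X := (1, 0).
Definition Xsum (s : seq X) : X := foldr Xadd X0 s.

Definition qop (p r : X) : X := (p.1 * r.1, r.1 *: p.2 + br p.2 r.2).
Definition T (p r s : X) : X := qop (qop p r) s.

(* Linear maps out of X^{(x)n} are represented by multilinear maps. *)
Definition Xlin (f : X -> X) : Prop :=
  forall c p q, f (Xadd (Xscale c p) q) = Xadd (Xscale c (f p)) (f q).
Definition Xtrilin (psi : X -> X -> X -> X) : Prop :=
  [/\ (forall v w, Xlin (fun u => psi u v w)),
      (forall u w, Xlin (fun v => psi u v w)) &
      (forall u v, Xlin (psi u v))].

(* Elements of X^{(x)3} are represented by finite sums of pure tensors
   (lists of triples); two such sums are equal in X^{(x)3} iff every linear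
   functional on X^{(x)3}, i.e. every trilinear form on X, agrees on them. *)
Definition lin_form (f : X -> K) : Prop :=
  forall c p q, f (Xadd (Xscale c p) q) = c * f p + f q.
Definition trilin_form (F : X -> X -> X -> K) : Prop :=
  [/\ (forall v w, lin_form (fun u => F u v w)),
      (forall u w, lin_form (fun v => F u v w)) &
      (forall u v, lin_form (F u v))].
Definition teq3 (s t : seq (X * X * X)) : Prop :=
  forall F, trilin_form F ->
    \sum_(e <- s) F e.1.1 e.1.2 e.2 = \sum_(e <- t) F e.1.1 e.1.2 e.2.

Definition Delta (p : X) : seq (X * X) := [:: (p, Xe); (Xe, (0, p.2))].
Definition Delta3 (p : X) : seq (X * X * X) :=
  flatten [seq [seq (d.1, d.2, t.2) | d <- Delta t.1] | t <- Delta p].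

Definition app3 (h : X -> X -> X -> X) (e : X * X * X) : X := h e.1.1 e.1.2 e.2.

(* sigma Delta_3^{(x)3}(u (x) v (x) w), as a list of triples (A1,A2,A3) with
   Ai = u^(i) (x) v^(i) (x) w^(i) *)
Definition sweep3 (u v w : X) : seq ((X * X * X) * (X * X * X) * (X * X * X)) :=
  flatten (flatten
    [seq [seq [seq ((du.1.1, dv.1.1, dw.1.1), (du.1.2, dv.1.2, dw.1.2),
                    (du.2, dv.2, dw.2)) | dw <- Delta3 w] | dv <- Delta3 v]
      | du <- Delta3 u]).

Definition TSD_C1 (f : X -> X) : Prop :=
  Xlin f /\
  forall p, teq3 (Delta3 (f p))
    (flatten [seq [:: (f e.1.1, e.1.2, e.2); (e.1.1, f e.1.2, e.2);
                      (e.1.1, e.1.2, f e.2)] | e <- Delta3 p]).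

Definition TSD_C2 (psi : X -> X -> X -> X) : Prop :=
  Xtrilin psi /\
  forall u v w, teq3 (Delta3 (psi u v w))
    (flatten [seq [:: (app3 psi a.1.1, app3 T a.1.2, app3 T a.2);
                      (app3 T a.1.1, app3 psi a.1.2, app3 T a.2);
                      (app3 T a.1.1, app3 T a.1.2, app3 psi a.2)]
             | a <- sweep3 u v w]).

Definition TSD_d1 (f : X -> X) (x y z : X) : X :=
  Xsub (Xsub (Xsub (f (T x y z)) (T (f x) y z)) (T x (f y) z)) (T x y (f z)).

Definition TSD_d2 (psi : X -> X -> X -> X) (x y z w u : X) : X :=
  Xsub (Xadd (T (psi x y z) w u) (psi (T x y z) w u))
    (Xsum (flatten [seq [seq
       let A1 := T x dw.1.1 du.1.1 in
       let A2 := T y dw.1.2 du.1.2 in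
       let A3 := T z dw.2 du.2 in
       let P1 := psi x dw.1.1 du.1.1 in
       let P2 := psi y dw.1.2 du.1.2 in
       let P3 := psi z dw.2 du.2 in
       Xadd (Xadd (Xadd (psi A1 A2 A3) (T P1 A2 A3)) (T A1 P2 A3)) (T A1 A2 P3)
     | du <- Delta3 u] | dw <- Delta3 w])).

Definition TSD_Z2 (psi : X -> X -> X -> X) : Prop :=
  TSD_C2 psi /\ (forall x y z w u, TSD_d2 psi x y z w u = X0).

Definition TSD_B2 (psi : X -> X -> X -> X) : Prop :=
  exists f, TSD_C1 f /\ (forall x y z, psi x y z = TSD_d1 f x y z).

Definition Theta2 (phi : g -> g -> g) (p r s : X) : X :=
  (0, r.1 *: phi p.2 s.2 + s.1 *: phi p.2 r.2 + br (phi p.2 r.2) s.2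
      + phi (br p.2 r.2) s.2).

End LieTSD.

(* Theta2 phi is the first-order part of the ternary operation T of the Lie
   algebra g + eps g with bracket
     [x + eps x', y + eps y'] = [x, y] + eps ([x, y'] + [x', y] + phi x y),
   which satisfies the Jacobi identity exactly when phi is a Lie 2-cocycle.
   For every Lie algebra, T = q o (q (x) 1) is ternary self-distributive: the
   right multiplications R_s := q(-, s) obey R_s R_r = R_r R_s + R_(q(r, s')),
   s' = (0, s.2), by the Jacobi identity, and commuting R_w and R_u past
   R_z R_y produces exactly the nine nonzero terms of the distributive law.
   The eps-part of self-distributivity for the deformed algebra is the TSD
   cocycle condition for Theta2 phi. *)

From HB Require Import structures.
From mathcomp Require Import all_boot all_order all_algebra.
From mathcomp Require Import ring.
Set Implicit Arguments. Unset Strict Implicit. Unset Printing Implicit Defensive.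
Import GRing.Theory.
Local Open Scope ring_scope.

(* [ring] sees brackets only as atoms and knows nothing about scalar actions;
   embedding V as a square-zero ideal of the commutative ring K + V lets it
   normalize K-linear expressions in V. *)
Section TrivialExtension.
Variables (K : fieldType) (V : lmodType K).

Definition triv_ext : Type := (K * V)%type.
HB.instance Definition _ := GRing.Zmodule.on triv_ext.

Definition tx_mul (u v : triv_ext) : triv_ext := (u.1 * v.1, u.1 *: v.2 + v.1 *: u.2).

Lemma tx_mulA : associative tx_mul.
Proof.
move=> [a x] [b y] [c z]; congr pair; rewrite /= ?mulrA //.
by rewrite !scalerDr !scalerA addrA (mulrC c a) (mulrC c b).
Qed.

Lemma tx_mulC : commutative tx_mul.
Proof. by move=> [a x] [b y]; rewrite /tx_mul /= mulrC addrC. Qed.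

Lemma tx_mul1 : left_id (1, 0) tx_mul.
Proof. by move=> [a x]; rewrite /tx_mul /= mul1r scale1r scaler0 addr0. Qed.

Lemma tx_mulDl : left_distributive tx_mul +%R.
Proof.
move=> [a x] [b y] [c z]; congr pair; rewrite /= ?mulrDl //.
by rewrite scalerDl scalerDr addrACA.
Qed.

Lemma tx_one_neq0 : (1, 0) != 0 :> triv_ext.
Proof. by apply/eqP => -[] /eqP; rewrite oner_eq0. Qed.

HB.instance Definition _ :=
  GRing.Zmodule_isComNzRing.Build triv_ext tx_mulA tx_mulC tx_mul1 tx_mulDl tx_one_neq0.

Definition tx_scal (k : K) : triv_ext := (k, 0).

Lemma tx_scal_is_zmod_morphism : {morph tx_scal : k l / k - l}.
Proof. by move=> k l; congr pair; rewrite /= subr0. Qed.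

Lemma tx_scal_is_monoid_morphism : monoid_morphism tx_scal.
Proof. by split=> [|k l] //; congr pair; rewrite /= !scaler0 addr0. Qed.

HB.instance Definition _ :=
  GRing.isZmodMorphism.Build K triv_ext tx_scal tx_scal_is_zmod_morphism.
HB.instance Definition _ :=
  GRing.isMonoidMorphism.Build K triv_ext tx_scal tx_scal_is_monoid_morphism.

Definition tx_vec (v : V) : triv_ext := (0, v).

Lemma tx_vec_inj : injective tx_vec. Proof. by move=> u v []. Qed.
Lemma tx_vec0 : tx_vec 0 = 0. Proof. by []. Qed.
Lemma tx_vecD u v : tx_vec (u + v) = tx_vec u + tx_vec v.
Proof. by congr pair; rewrite /= addr0. Qed.
Lemma tx_vecN v : tx_vec (- v) = - tx_vec v.
Proof. by congr pair; rewrite /= oppr0. Qed.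
Lemma tx_vecZ k v : tx_vec (k *: v) = tx_scal k * tx_vec v.
Proof. by congr pair; rewrite /= ?mulr0 // scaler0 addr0. Qed.

Definition tx_vecE := (tx_vec0, tx_vecD, tx_vecN, tx_vecZ).

End TrivialExtension.

Ltac module_ring := apply: tx_vec_inj; rewrite !tx_vecE; ring.

Section LinearMap.
Variables (K : fieldType) (V : lmodType K) (f : V -> V).
Hypothesis f_lin : linear_map f.

Lemma linear_map0 : f 0 = 0.
Proof. by apply: (addrI (f 0)); rewrite addr0 -{1}[f 0]scale1r -f_lin scale1r addr0. Qed.

Lemma linear_mapD u v : f (u + v) = f u + f v.
Proof. by rewrite -[u in LHS]scale1r f_lin scale1r. Qed.

Lemma linear_mapZ k u : f (k *: u) = k *: f u.
Proof. by rewrite -[_ *: u]addr0 f_lin linear_map0 addr0. Qed.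

Lemma linear_mapN u : f (- u) = - f u.
Proof. by rewrite -scaleN1r linear_mapZ scaleN1r. Qed.

Lemma linear_mapB u v : f (u - v) = f u - f v.
Proof. by rewrite linear_mapD linear_mapN. Qed.

End LinearMap.

Definition linear_mapE K V f (f_lin : @linear_map K V f) :=
  (linear_map0 f_lin, linear_mapD f_lin, linear_mapZ f_lin, linear_mapN f_lin,
   linear_mapB f_lin).

Definition bilinearE K V B (B_bilin : @bilinear_map K V B) :=
  (fun z => linear_mapE (B_bilin.1 z), fun z => linear_mapE (B_bilin.2 z)).

Definition jacobiator (K : fieldType) (V : lmodType K) (br : V -> V -> V) (x y z : V) : V :=
  br x (br y z) + br y (br z x) + br z (br x y).

Lemma alternating_antisym (K : fieldType) (V : lmodType K) (B : V -> V -> V) :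
  bilinear_map B -> (forall x, B x x = 0) -> forall x y, B x y = - B y x.
Proof.
move=> B_bilin B_alt x y; apply/eqP; rewrite -addr_eq0; apply/eqP.
by have := B_alt (x + y); rewrite !(bilinearE B_bilin) !B_alt add0r addr0.
Qed.

Section XArith.
Variables (K : fieldType) (V : lmodType K).
Local Notation X0 := (X0 V).

Lemma XaddA : associative (@Xadd K V).
Proof. by move=> p q r; congr pair; rewrite /= addrA. Qed.

Lemma XaddC : commutative (@Xadd K V).
Proof. by move=> p q; congr pair; rewrite /= addrC. Qed.

Lemma Xadd0 p : Xadd X0 p = p.
Proof. by case: p => a x; congr pair; rewrite /= add0r. Qed.

Lemma XaddX0 p : Xadd p X0 = p.
Proof. by rewrite XaddC Xadd0. Qed.

Lemma Xsubpp p : Xsub p p = X0.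
Proof. by congr pair; rewrite /= subrr. Qed.

Lemma Delta3E p :
  Delta3 p = [:: (p, Xe V, Xe V); (Xe V, (0, p.2), Xe V);
                 (Xe V, Xe V, (0, p.2)); (Xe V, X0, (0, p.2))].
Proof. by []. Qed.

End XArith.

Section ShelfOperations.
Variables (K : fieldType) (V : lmodType K) (br : V -> V -> V).
Hypothesis br_bilin : bilinear_map br.
Local Notation qop := (qop br).
Local Notation T := (T br).
Local Notation Xe := (Xe V).
Local Notation X0 := (X0 V).

Lemma qopDl p p' s : qop (Xadd p p') s = Xadd (qop p s) (qop p' s).
Proof. by congr pair; rewrite /= ?mulrDl // (bilinearE br_bilin) scalerDr addrACA. Qed.

Lemma qopXe p : qop p Xe = p.
Proof. by case: p => a x; congr pair; rewrite /= ?mulr1 // (bilinearE br_bilin) scale1r addr0. Qed.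

Lemma qopX0l s : qop X0 s = X0.
Proof. by congr pair; rewrite /= ?mul0r // (bilinearE br_bilin) scaler0 addr0. Qed.

Lemma qopX0r p : qop p X0 = X0.
Proof. by congr pair; rewrite /= ?mulr0 // (bilinearE br_bilin) scale0r addr0. Qed.

Lemma T_XeXe p : T p Xe Xe = p.
Proof. by rewrite /T !qopXe. Qed.

Lemma T_Xer p r : T p r Xe = qop p r.
Proof. exact: qopXe. Qed.

Lemma T_Xem p s : T p Xe s = qop p s.
Proof. by rewrite /T qopXe. Qed.

Lemma T_Xel r s : T Xe r s = Xscale (r.1 * s.1) Xe.
Proof. by congr pair; rewrite /= ?mul1r ?mulr1 // !(scaler0, add0r, bilinearE br_bilin). Qed.

Lemma T_X0l r s : T X0 r s = X0.
Proof. by rewrite /T !qopX0l. Qed.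

Lemma T_X0m p s : T p X0 s = X0.
Proof. by rewrite /T qopX0r qopX0l. Qed.

Lemma T_X0r p r : T p r X0 = X0.
Proof. exact: qopX0r. Qed.

End ShelfOperations.

Section LieShelf.
Variables (K : fieldType) (V : lmodType K) (br : V -> V -> V).
Hypothesis br_lie : is_lie_bracket br.
Let br_bilin : bilinear_map br. Proof. by case: br_lie. Qed.
Local Notation qop := (qop br).
Local Notation T := (T br).

Lemma lie_jacobiator x y z : jacobiator br x y z = 0.
Proof. by case: br_lie => _ _; apply. Qed.

Lemma lie_antisym x y : br x y = - br y x.
Proof. by case: br_lie => _ br_alt _; apply: alternating_antisym. Qed.

Lemma lie_leibniz x y z : br (br x y) z = br (br x z) y + br x (br y z).
Proof.
apply/eqP; rewrite -subr_eq0; apply/eqP.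
rewrite -oppr0 -(lie_jacobiator x y z) /jacobiator.
rewrite (lie_antisym (br x z)) (lie_antisym (br x y)) (lie_antisym z x).
by rewrite (bilinearE br_bilin); module_ring.
Qed.

Lemma qop_comm p r s :
  qop (qop p r) s = Xadd (qop (qop p s) r) (qop p (qop r (0, s.2))).
Proof.
case: p r s => [a x] [b y] [c z]; congr pair; rewrite /= ?mul0r ?addr0; first by ring.
rewrite !(bilinearE br_bilin) lie_leibniz scale0r add0r; module_ring.
Qed.

Lemma qop_T p r s t :
  qop (T p r s) t = Xadd (Xadd (T (qop p t) r s) (T p (qop r (0, t.2)) s))
                         (T p r (qop s (0, t.2))).
Proof. by rewrite /T qop_comm [qop (qop p r) t]qop_comm qopDl. Qed.

Lemma T_self_distributive x y z w u :
  T (T x y z) w u =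
  Xsum (flatten [seq [seq T (T x dw.1.1 du.1.1) (T y dw.1.2 du.1.2) (T z dw.2 du.2)
                     | du <- Delta3 u] | dw <- Delta3 w]).
Proof.
rewrite !Delta3E /Xsum /= !(T_XeXe, T_Xer, T_Xem, qopX0r, T_X0l, T_X0m, T_X0r) //.
rewrite !(Xadd0, XaddX0) -[LHS]/(qop (qop (T x y z) w) u).
by rewrite qop_T !qopDl // !qop_T -!XaddA.
Qed.

End LieShelf.

Section TrilinearForm.
Variables (K : fieldType) (V : lmodType K) (F : X V -> X V -> X V -> K).
Hypothesis F_tri : trilin_form F.
Local Notation X0 := (X0 V).

Lemma lin_form0 (f : X V -> K) : lin_form f -> f X0 = 0.
Proof.
move=> f_lin; apply: (addrI (f X0)); rewrite addr0 -{1}[f X0]mul1r -f_lin.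
by congr f; congr pair; rewrite /= ?mulr0 !addr0 // scaler0.
Qed.

Lemma lin_formZ (f : X V -> K) k p : lin_form f -> f (Xscale k p) = k * f p.
Proof. by move=> f_lin; rewrite -[Xscale k p]XaddX0 f_lin lin_form0 // addr0. Qed.

Lemma lin_form_vecD (f : X V -> K) x y : lin_form f -> f (0, x + y) = f (0, x) + f (0, y).
Proof.
move=> f_lin; rewrite -[f (0, x)]mul1r -f_lin.
by congr f; congr pair; rewrite /= ?mulr0 ?addr0 // scale1r.
Qed.

Lemma lin_form_vecZ (f : X V -> K) k x : lin_form f -> f (0, k *: x) = k * f (0, x).
Proof. by move=> f_lin; rewrite -lin_formZ //; congr f; congr pair; rewrite /= mulr0. Qed.

Let F_l q r : lin_form (fun p => F p q r). Proof. by case: F_tri. Qed.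
Let F_m p r : lin_form (fun q => F p q r). Proof. by case: F_tri. Qed.
Let F_r p q : lin_form (F p q). Proof. by case: F_tri. Qed.

Lemma trilin_form0l q r : F X0 q r = 0. Proof. exact: (lin_form0 (F_l q r)). Qed.
Lemma trilin_form0m p r : F p X0 r = 0. Proof. exact: (lin_form0 (F_m p r)). Qed.
Lemma trilin_form0r p q : F p q X0 = 0. Proof. exact: (lin_form0 (F_r p q)). Qed.

Lemma trilin_formZl k p q r : F (Xscale k p) q r = k * F p q r.
Proof. exact: (lin_formZ _ _ (F_l q r)). Qed.
Lemma trilin_formZm k p q r : F p (Xscale k q) r = k * F p q r.
Proof. exact: (lin_formZ _ _ (F_m p r)). Qed.
Lemma trilin_formZr k p q r : F p q (Xscale k r) = k * F p q r.
Proof. exact: (lin_formZ _ _ (F_r p q)). Qed.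

Lemma trilin_form_vecDl x y q r : F (0, x + y) q r = F (0, x) q r + F (0, y) q r.
Proof. exact: (lin_form_vecD _ _ (F_l q r)). Qed.
Lemma trilin_form_vecDm p x y r : F p (0, x + y) r = F p (0, x) r + F p (0, y) r.
Proof. exact: (lin_form_vecD _ _ (F_m p r)). Qed.
Lemma trilin_form_vecDr p q x y : F p q (0, x + y) = F p q (0, x) + F p q (0, y).
Proof. exact: (lin_form_vecD _ _ (F_r p q)). Qed.

Lemma trilin_form_vecZl k x q r : F (0, k *: x) q r = k * F (0, x) q r.
Proof. exact: (lin_form_vecZ _ _ (F_l q r)). Qed.
Lemma trilin_form_vecZm p k x r : F p (0, k *: x) r = k * F p (0, x) r.
Proof. exact: (lin_form_vecZ _ _ (F_m p r)). Qed.
Lemma trilin_form_vecZr p q k x : F p q (0, k *: x) = k * F p q (0, x).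
Proof. exact: (lin_form_vecZ _ _ (F_r p q)). Qed.

End TrilinearForm.

Section ThetaCochain.
Variables (K : fieldType) (g : lmodType K) (br phi : g -> g -> g).
Hypotheses (br_bilin : bilinear_map br) (phi_bilin : bilinear_map phi).
Local Notation Theta := (Theta2 br phi).
Local Notation T := (T br).
Local Notation Xe := (Xe g).
Local Notation X0 := (X0 g).

Ltac Theta_eval := congr pair;
  rewrite /= !(bilinearE br_bilin, bilinearE phi_bilin) !(scaler0, scale0r, scale1r, addr0, add0r).

Lemma Theta2_Xel q r : Theta Xe q r = X0. Proof. by Theta_eval. Qed.
Lemma Theta2_XeXe p : Theta p Xe Xe = X0. Proof. by Theta_eval. Qed.
Lemma Theta2_Xem p s : Theta p Xe s = (0, phi p.2 s.2). Proof. by Theta_eval. Qed.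
Lemma Theta2_Xer p r : Theta p r Xe = (0, phi p.2 r.2). Proof. by Theta_eval. Qed.
Lemma Theta2_X0l q r : Theta X0 q r = X0. Proof. by Theta_eval. Qed.
Lemma Theta2_X0m p s : Theta p X0 s = X0. Proof. by Theta_eval. Qed.
Lemma Theta2_X0r p r : Theta p r X0 = X0. Proof. by Theta_eval. Qed.

Lemma Theta2_trilinear : Xtrilin Theta.
Proof.
split=> [q r|p r|p q] k [a x] [b y]; congr pair; rewrite /= ?mulr0 ?addr0 //;
  rewrite !(bilinearE br_bilin, bilinearE phi_bilin); module_ring.
Qed.

Lemma Theta2_comultiplicative u v w : teq3 (Delta3 (Theta u v w))
    (flatten [seq [:: (app3 Theta a.1.1, app3 T a.1.2, app3 T a.2);
                      (app3 T a.1.1, app3 Theta a.1.2, app3 T a.2);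
                      (app3 T a.1.1, app3 T a.1.2, app3 Theta a.2)]
             | a <- sweep3 u v w]).
Proof.
case: u v w => [a x] [b y] [c z] F F_tri.
rewrite /sweep3 !Delta3E /app3 unlock /= !(T_Xel br_bilin, Theta2_Xel).
rewrite ?(T_X0l br_bilin, T_X0m br_bilin, T_X0r br_bilin, T_XeXe br_bilin).
rewrite !(trilin_form0l F_tri, trilin_form0m F_tri, trilin_form0r F_tri).
rewrite !(trilin_formZl F_tri, trilin_formZm F_tri, trilin_formZr F_tri) /=.
rewrite !(Theta2_XeXe, Theta2_X0l, Theta2_X0m, Theta2_X0r) !(Theta2_Xem, Theta2_Xer).
rewrite /Theta2 /= !scale0r !add0r.
rewrite !(trilin_form0l F_tri, trilin_form0m F_tri, trilin_form0r F_tri).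
rewrite !(trilin_form_vecDl F_tri, trilin_form_vecDm F_tri, trilin_form_vecDr F_tri).
rewrite !(trilin_form_vecZl F_tri, trilin_form_vecZm F_tri, trilin_form_vecZr F_tri).
ring.
Qed.

End ThetaCochain.

Lemma map_flatten_allpairs (A B C D : Type) (k : C -> D) (h : A -> B)
    (F : B -> B -> C) (s t : seq A) :
  map k (flatten [seq [seq F a b | b <- map h t] | a <- map h s]) =
  flatten [seq [seq k (F (h a) (h b)) | b <- t] | a <- s].
Proof. by elim: s => //= a s IH; rewrite map_cat IH -!map_comp. Qed.

Section CocycleExtension.
Variables (K : fieldType) (g : lmodType K) (br phi : g -> g -> g).
Hypotheses (br_lie : is_lie_bracket br) (phi_cocycle : lie_Z2 br phi).
Let br_bilin : bilinear_map br. Proof. by case: br_lie. Qed.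
Let phi_bilin : bilinear_map phi. Proof. by case: phi_cocycle => -[]. Qed.

(* The pair (x, x') stands for x + eps x', with eps^2 = 0. *)
Definition cext_bracket (u v : g * g) : g * g :=
  (br u.1 v.1, br u.1 v.2 + br u.2 v.1 + phi u.1 v.1).

Lemma cext_bilinear : bilinear_map cext_bracket.
Proof.
split=> [w|u] k [x x'] [y y']; congr pair;
  rewrite /= !(bilinearE br_bilin) ?(bilinearE phi_bilin) //; module_ring.
Qed.

Lemma cext_lie : is_lie_bracket cext_bracket.
Proof.
have [_ br_alt jacobi] := br_lie; have [[_ phi_alt] phi_closed] := phi_cocycle.
have phi_anti := alternating_antisym phi_bilin phi_alt.
split=> [|[x x']|[x x'] [y y'] [z z']]; first exact: cext_bilinear.
  congr pair; rewrite /= ?br_alt // phi_alt addr0.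
  by rewrite (lie_antisym br_lie x') addrN.
rewrite /cext_bracket /=; congr pair; first exact: jacobi.
transitivity (jacobiator br x' y z + jacobiator br x y' z + jacobiator br x y z'
              - lie_d2 br phi x y z); last first.
  by rewrite !(lie_jacobiator br_lie) phi_closed !add0r oppr0.
rewrite /jacobiator /lie_d2 !(lie_antisym br_lie (phi _ _)).
rewrite (phi_anti (br x y)) (phi_anti (br y z)) (phi_anti (br z x)).
rewrite !(bilinearE br_bilin); module_ring.
Qed.

Local Notation Xg := (X g).
Local Notation Xext := (X (g * g)%type).

(* An element (a, (x, x')) of X (g * g) stands for (a, x) + eps (0, x'). *)
Definition Xlift (p : Xg) : Xext := (p.1, (p.2, 0)).
Definition Xbase (P : Xext) : Xg := (P.1, P.2.1).
Definition Xeps (P : Xext) : Xg := (0, P.2.2).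

Lemma Xbase_lift p : Xbase (Xlift p) = p. Proof. by case: p. Qed.
Lemma Xeps_lift p : Xeps (Xlift p) = X0 g. Proof. by []. Qed.

Lemma Xeps_sum s : Xeps (Xsum s) = Xsum (map Xeps s).
Proof. by elim: s => //= P s <-; congr pair; rewrite /= add0r. Qed.

Lemma Delta3_lift p :
  Delta3 (Xlift p) = [seq (Xlift e.1.1, Xlift e.1.2, Xlift e.2) | e <- Delta3 p].
Proof. by []. Qed.

Lemma Xbase_T P1 P2 P3 :
  Xbase (T cext_bracket P1 P2 P3) = T br (Xbase P1) (Xbase P2) (Xbase P3).
Proof. by case: P1 P2 P3 => [a [x x']] [b [y y']] [c [z z']]. Qed.

Lemma Xeps_T P1 P2 P3 :
  Xeps (T cext_bracket P1 P2 P3) =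
  Xadd (Xadd (Xadd (Theta2 br phi (Xbase P1) (Xbase P2) (Xbase P3))
                   (T br (Xeps P1) (Xbase P2) (Xbase P3)))
             (T br (Xbase P1) (Xeps P2) (Xbase P3)))
       (T br (Xbase P1) (Xbase P2) (Xeps P3)).
Proof.
case: P1 P2 P3 => [a [x x']] [b [y y']] [c [z z']].
congr pair; first by rewrite /= !mulr0 !mul0r !addr0.
rewrite /= !(bilinearE br_bilin) !(bilinearE phi_bilin); module_ring.
Qed.

Lemma Xbase_T_lift p r s :
  Xbase (T cext_bracket (Xlift p) (Xlift r) (Xlift s)) = T br p r s.
Proof. by rewrite Xbase_T !Xbase_lift. Qed.

Lemma Xeps_T_lift p r s :
  Xeps (T cext_bracket (Xlift p) (Xlift r) (Xlift s)) = Theta2 br phi p r s.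
Proof. by rewrite Xeps_T !Xbase_lift !Xeps_lift T_X0l ?T_X0m ?T_X0r // !XaddX0. Qed.

Lemma TSD_d2_Theta2 x y z w u : TSD_d2 br (Theta2 br phi) x y z w u = X0 g.
Proof.
have := congr1 Xeps (T_self_distributive cext_lie
                       (Xlift x) (Xlift y) (Xlift z) (Xlift w) (Xlift u)).
rewrite Xeps_T Xbase_T_lift Xeps_T_lift !Xbase_lift !Xeps_lift T_X0m ?T_X0r // !XaddX0.
rewrite !Delta3_lift Xeps_sum map_flatten_allpairs.
under eq_map => dw do under eq_map => du do rewrite Xeps_T !Xbase_T_lift !Xeps_T_lift.
by rewrite /TSD_d2 XaddC => <-; apply: Xsubpp.
Qed.

End CocycleExtension.

Lemma Theta2_coboundary (K : fieldType) (g : lmodType K) (br phi : g -> g -> g) :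
  bilinear_map br -> lie_B2 br phi -> TSD_B2 br (Theta2 br phi).
Proof.
move=> br_bilin [f [f_lin phi_eq]]; exists (fun p => (0, f p.2)); split; first split.
- by move=> k [a x] [b y]; congr pair; rewrite /= ?mulr0 ?addr0 // f_lin.
- move=> [a x] F F_tri; rewrite !Delta3E unlock /= linear_map0 //.
  by rewrite !(trilin_form0l F_tri, trilin_form0m F_tri, trilin_form0r F_tri) !(add0r, addr0).
move=> [a x] [b y] [c z]; congr pair; rewrite /= ?mul0r ?mulr0; first by ring.
rewrite !phi_eq /lie_d1 !(bilinearE br_bilin) !(linear_mapE f_lin); module_ring.
Qed.

Lemma Theta2_linear_cochain (K : fieldType) (g : lmodType K) (br : g -> g -> g)
    (k : K) (phi phi' : g -> g -> g) (p r s : X g) :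
  bilinear_map br ->
  Theta2 br (fun x y => k *: phi x y + phi' x y) p r s
  = Xadd (Xscale k (Theta2 br phi p r s)) (Theta2 br phi' p r s).
Proof.
move=> br_bilin; congr pair; rewrite /= ?mulr0 ?addr0 //.
rewrite !(bilinearE br_bilin); module_ring.
Qed.

Theorem mainTheorem7 (K : fieldType) (g : lmodType K) (br : g -> g -> g) :
  is_lie_bracket br ->
  [/\ (forall phi, lie_Z2 br phi -> TSD_Z2 br (Theta2 br phi)),
      (forall phi, lie_B2 br phi -> TSD_B2 br (Theta2 br phi)) &
      (forall (c : K) (phi phi' : g -> g -> g) (p r s : X g),
         Theta2 br (fun x y => c *: phi x y + phi' x y) p r s
         = Xadd (Xscale c (Theta2 br phi p r s)) (Theta2 br phi' p r s))].
Proof.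
move=> br_lie; have br_bilin : bilinear_map br by case: br_lie.
split=> [phi phi_Z2|phi|c phi phi' p r s].
- have phi_bilin : bilinear_map phi by case: phi_Z2 => -[].
  split; first split.
  + exact: Theta2_trilinear.
  + exact: Theta2_comultiplicative.
  + exact: TSD_d2_Theta2.
- exact: Theta2_coboundary.
- exact: Theta2_linear_cochain.
Qed.
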